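(* Consider the data model $\boldsymbol x=\boldsymbol f(\boldsymbol s)$ and the J-VolMax problem. Assume there is a finite set $\mathcal{S}_N=\{\boldsymbol s^{(1)},\dots,\boldsymbol s^{(N)}\}\subset\mathcal{S}$, with $\boldsymbol x^{(n)}=\boldsymbol f(\boldsymbol s^{(n)})$, such that the SDI condition holds at each $\boldsymbol s^{(n)}$. Let $\widehat{\boldsymbol g}\in\mathcal{G}$ be the optimal encoder learned by J-VolMax, and suppose $$\widehat{\boldsymbol g}(\boldsymbol x^{(n)})=\widehat{\boldsymbol\Pi}(\boldsymbol s^{(n)})\widehat{\boldsymbol\rho}(\boldsymbol s^{(n)}),\quad\forall\boldsymbol s^{(n)}\in\mathcal{S}_N,$$ for permutation matrices $\widehat{\boldsymbol\Pi}(\boldsymbol s^{(n)})\in\mathcal{P}_d$ possibly depending on $\boldsymbol s^{(n)}$ and a map $\widehat{\boldsymbol\rho}(\boldsymbol s)=(\widehat\rho_1(s_1),\dots,\widehat\rho_d(s_d))$ of invertible component-wise transformations. Suppose moreover: 1. $\boldsymbol f,\widehat{\boldsymbol g},\widehat{\boldsymbol\rho}$ are Lipschitz continuous with constants $L_{\boldsymbol f},L_{\widehat{\boldsymbol g}},L_{\widehat{\boldsymbol\rho}}>0$; 2. there is $\gamma>0$ such that for every $\boldsymbol\Pi\in\mathcal{P}_d$ with $\boldsymbol\Pi\ne\widehat{\boldsymbol\Pi}(\boldsymbol s^{(n)})$, $\|\widehat{\boldsymbol g}(\boldsymbol x^{(n)})-\boldsymbol\Pi\widehat{\boldsymbol\rho}(\boldsymbol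 s^{(n)})\|_2\ge\gamma$ for all $n\in[N]$; 3. with $\mathcal{N}^{(n)}=\{\boldsymbol s\in\mathcal{S}:\|\boldsymbol s-\boldsymbol s^{(n)}\|_2<r^{(n)}\}$ where $r^{(n)}<\frac{\gamma}{2(L_{\boldsymbol f}L_{\widehat{\boldsymbol g}}+L_{\widehat{\boldsymbol\rho}})}$, the union $\mathcal{N}=\bigcup_{n=1}^N\mathcal{N}^{(n)}$ is a connected subset of $\mathcal{S}$. Then $\widehat{\boldsymbol\Pi}(\boldsymbol s^{(n)})=\widehat{\boldsymbol\Pi}$ for a single fixed $\widehat{\boldsymbol\Pi}\in\mathcal{P}_d$, and consequently $\widehat{\boldsymbol g}(\boldsymbol x^{(n)})=\widehat{\boldsymbol\Pi}\widehat{\boldsymbol\rho}(\boldsymbol s^{(n)})$ for all $n\in[N]$.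
   Context: Data model: $\boldsymbol{s}\in\mathbb{R}^d$ is a random vector with distribution $p(\boldsymbol{s})$ and support $\mathcal{S}\subseteq\mathbb{R}^d$; $\boldsymbol{f}=(f_1,\dots,f_m):\mathbb{R}^d\to\mathbb{R}^m$ with $m\ge d$ is an unknown diffeomorphism mapping $\mathcal{S}$ onto a $d$-dimensional manifold $\mathcal{X}\subset\mathbb{R}^m$, and $\boldsymbol{x}=\boldsymbol{f}(\boldsymbol{s})$. $\boldsymbol{J}_{\boldsymbol f}(\boldsymbol s)\in\mathbb{R}^{m\times d}$ has entries $\partial f_i/\partial s_j$; its $i$-th row is $\nabla f_i(\boldsymbol s)^\top$. $\mathcal{P}_d$ denotes the set of $d\times d$ permutation matrices. Convex geometry: for $\boldsymbol{w}(\boldsymbol s)$ with positive entries, $\mathcal{B}_1^{\boldsymbol w(\boldsymbol s)}=\{\boldsymbol y\in\mathbb{R}^d:\sum_k |y_k|/w_k(\boldsymbol s)\le 1\}$, and $\mathcal{B}_\infty^{\boldsymbol w(\boldsymbol s)}$ denotes its polar $\{\boldsymbol y:\max_k w_k(\boldsymbol s)|y_k|\le1\}$, with extreme points $(\pm w_1(\boldsymbol s)^{-1},\dots,\pm w_d(\boldsymbol s)^{-1})$. For a bounded convex set $P$: $\mathcal{E}(P)$ is its maximum-volume inscribed ellipsoid, $P^*=\{\boldsymbol x:\boldsymbol x^\top\boldsymbol y\le1\ \forall\boldsymbol y\in P\}$, ${\rm bd}(P)$ its boundary, ${\rm extr}(P)$ its extreme points; ${\rm conv}$ is convex hull. SDI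 condition at $\boldsymbol s$: there is $\boldsymbol w(\boldsymbol s)$ with positive entries such that $\nabla f_1(\boldsymbol s),\dots,\nabla f_m(\boldsymbol s)\in\mathcal{B}_1^{\boldsymbol w(\boldsymbol s)}$ and (1) $\mathcal{E}(\mathcal{B}_1^{\boldsymbol w(\boldsymbol s)})\subseteq{\rm conv}\{\nabla f_i(\boldsymbol s)\}_{i=1}^m\subseteq\mathcal{B}_1^{\boldsymbol w(\boldsymbol s)}$; (2) ${\rm conv}\{\nabla f_i(\boldsymbol s)\}_{i=1}^m{}^*\cap{\rm bd}(\mathcal{E}(\mathcal{B}_1^{\boldsymbol w(\boldsymbol s)})^* )={\rm extr}(\mathcal{B}_\infty^{\boldsymbol w(\boldsymbol s)})$. J-VolMax: with decoder $\boldsymbol f_{\boldsymbol\theta}:\mathbb{R}^d\to\mathbb{R}^m$, encoder $\boldsymbol g_{\boldsymbol\phi}:\mathbb{R}^m\to\mathbb{R}^d$ from a class $\mathcal{G}$, and constant $C>0$: maximize $\mathbb{E}[\log\det(\boldsymbol J_{\boldsymbol f_{\boldsymbol\theta}}(\boldsymbol g_{\boldsymbol\phi}(\boldsymbol x))^\top\boldsymbol J_{\boldsymbol f_{\boldsymbol\theta}}(\boldsymbol g_{\boldsymbol\phi}(\boldsymbol x)))]$ subject to $\|[\boldsymbol J_{\boldsymbol f_{\boldsymbol\theta}}(\boldsymbol g_{\boldsymbol\phi}(\boldsymbol x))]_{i,:}\|_1\le C$ for all $i\in[m]$ and $\boldsymbol x=\boldsymbol f_{\boldsymbol\theta}(\boldsymbol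 g_{\boldsymbol\phi}(\boldsymbol x))$ for all $\boldsymbol x\in\mathcal{X}$. *)

From HB Require Import structures.
From mathcomp Require Import all_boot all_order all_algebra.
From mathcomp Require Import all_classical all_reals all_analysis.

Set Implicit Arguments.
Unset Strict Implicit.
Unset Printing Implicit Defensive.

Import Order.TTheory GRing.Theory Num.Theory.
Import numFieldNormedType.Exports.
Local Open Scope classical_set_scope.
Local Open Scope ring_scope.

Definition norm2 {R : realType} {n : nat} (v : 'cV[R]_n) : R :=
  Num.sqrt (\sum_(i < n) (v i 0) ^+ 2).

Definition norm1_row {R : realType} {n : nat} (v : 'rV[R]_n) : R :=
  \sum_(j < n) `|v 0 j|.

Definition lipschitz2 {R : realType} {n k : nat} (L : R)
  (h : 'cV[R]_n -> 'cV[R]_k) : Prop :=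
  forall a b, norm2 (h a - h b) <= L * norm2 (a - b).

Definition jacobian {R : realType} {n k : nat} (h : 'cV[R]_n -> 'cV[R]_k)
  (s : 'cV[R]_n) : 'M[R]_(k, n) :=
  \matrix_(i < k, j < n) derive (fun z : 'cV[R]_n => h z i 0) s (delta_mx j 0).

Definition grad {R : realType} {n k : nat} (h : 'cV[R]_n -> 'cV[R]_k)
  (i : 'I_k) (s : 'cV[R]_n) : 'cV[R]_n := (row i (jacobian h s))^T.

Definition B1w {R : realType} {d : nat} (w : 'I_d -> R) : set 'cV[R]_d :=
  [set y | \sum_(k < d) `|y k 0| / w k <= 1].
Definition Binfw {R : realType} {d : nat} (w : 'I_d -> R) : set 'cV[R]_d :=
  [set y | forall k, w k * `|y k 0| <= 1].

(* Ellipsoid {c + A u : ||u||_2 <= 1}; its volume is proportional to |det A|. *)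
Definition ellipsoid {R : realType} {d : nat} (c : 'cV[R]_d) (A : 'M[R]_d)
  : set 'cV[R]_d := [set c + A *m u | u in [set u | norm2 u <= 1]].

Definition is_MVIE {R : realType} {d : nat} (P E : set 'cV[R]_d) : Prop :=
  exists c A, E = ellipsoid c A /\ E `<=` P /\
    forall c' A', ellipsoid c' A' `<=` P -> `|\det A'| <= `|\det A|.

Definition polar {R : realType} {d : nat} (P : set 'cV[R]_d) : set 'cV[R]_d :=
  [set x | forall y, P y -> (x^T *m y) 0 0 <= 1].

Definition bd {R : realType} {d : nat} (P : set 'cV[R]_d) : set 'cV[R]_d :=
  closure P `\` interior P.

Definition extr {R : realType} {d : nat} (P : set 'cV[R]_d) : set 'cV[R]_d :=
  [set x | P x /\ forall y z (t : R), P y -> P z -> 0 < t < 1 ->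
     x = t *: y + (1 - t) *: z -> y = z].

Definition conv_fin {R : realType} {d m : nat} (v : 'I_m -> 'cV[R]_d)
  : set 'cV[R]_d :=
  [set x | exists l : 'I_m -> R, (forall i, 0 <= l i) /\
     \sum_(i < m) l i = 1 /\ x = \sum_(i < m) l i *: v i].

Definition SDI {R : realType} {d m : nat} (f : 'cV[R]_d -> 'cV[R]_m)
  (s : 'cV[R]_d) : Prop :=
  exists w : 'I_d -> R, (forall k, 0 < w k) /\
    (forall i, B1w w (grad f i s)) /\
    exists E, is_MVIE (B1w w) E /\
      E `<=` conv_fin (fun i => grad f i s) /\
      conv_fin (fun i => grad f i s) `<=` B1w w /\
      polar (conv_fin (fun i => grad f i s)) `&` bd (polar E)
        = extr (Binfw w).

(* f is a diffeomorphism of R^d onto its image (a d-dimensional embedded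
   manifold of R^m): differentiable, injective immersion, with a continuous
   inverse on its image. *)
Definition diffeo_onto_image {R : realType} {d m : nat}
  (f : 'cV[R]_d -> 'cV[R]_m) : Prop :=
  (forall s, differentiable f s) /\
  (forall s, \rank (jacobian f s) = d) /\
  exists h : 'cV[R]_m -> 'cV[R]_d, (forall s, h (f s) = s) /\
    {within range f, continuous h}.

(* log det with log 0 = -oo (det(J^T J) >= 0 always). *)
Definition logdet_e {R : realType} (z : R) : \bar R :=
  if 0 < z then (ln z)%:E else -oo%E.

Section JVolMax.
Context {R : realType} {d m : nat} {dT : measure_display} {T : measurableType dT}.
Variables (P : probability T R) (xv : T -> 'cV[R]_m) (X : set 'cV[R]_m)
  (Theta Phi : Type) (fdec : Theta -> 'cV[R]_d -> 'cV[R]_m)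
  (genc : Phi -> 'cV[R]_m -> 'cV[R]_d) (G : set ('cV[R]_m -> 'cV[R]_d)) (C : R).

Definition jvm_feasible (th : Theta) (ph : Phi) : Prop :=
  G (genc ph) /\
  (forall x, X x -> forall i : 'I_m,
      norm1_row (row i (jacobian (fdec th) (genc ph x))) <= C) /\
  (forall x, X x -> x = fdec th (genc ph x)).

Definition jvm_objective (th : Theta) (ph : Phi) : \bar R :=
  (\int[P]_w logdet_e (\det ((jacobian (fdec th) (genc ph (xv w)))^T
                              *m jacobian (fdec th) (genc ph (xv w)))))%E.

Definition jvm_optimal (th : Theta) (ph : Phi) : Prop :=
  jvm_feasible th ph /\
  forall th' ph', jvm_feasible th' ph' ->
    (jvm_objective th' ph' <= jvm_objective th ph)%E.
End JVolMax.

(* If the neighbourhoods of s^(n) and s^(n') meet, then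
   |s^(n) - s^(n')| < r^(n) + r^(n') < gamma / (Lf Lg + Lrho), and the Lipschitz
   bounds show that the permutation found at s^(n') fits g(x^(n)) to within
   (Lf Lg + Lrho) |s^(n) - s^(n')| < gamma; by the gamma-separation it is the
   permutation found at s^(n).  Hence the neighbourhoods carrying a given
   permutation form a relatively clopen part of the connected union, i.e. all
   of it. *)

From HB Require Import structures.
From mathcomp Require Import all_boot all_order all_algebra.
From mathcomp Require Import all_classical all_reals all_analysis.
From mathcomp Require Import lra ring.
Set Implicit Arguments.
Unset Strict Implicit.
Unset Printing Implicit Defensive.

Import Order.TTheory GRing.Theory Num.Theory.
Import numFieldNormedType.Exports.
Local Open Scope classical_set_scope.
Local Open Scope ring_scope.

Section connected_cover.
Variables (T : topologicalType) (I Y : Type) (S : set T) (B : I -> set T) (c : I -> Y).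
Hypothesis openB : forall i, open (B i).
Hypothesis overlap_eq : forall i j z, S z -> B i z -> B j z -> c i = c j.

Lemma connected_bigcup_locally_const :
  connected (\bigcup_(i in [set: I]) (S `&` B i)) ->
  forall i j, (S `&` B i) !=set0 -> (S `&` B j) !=set0 -> c i = c j.
Proof.
move=> conn i j [zi SBzi] [zj [Szj Bzj]].
pose same := [set k | c k = c i].
have cover_same : \bigcup_(k in same) (S `&` B k) = \bigcup_(k in [set: I]) (S `&` B k).
  apply: conn; first by exists zi, i.
  - exists (\bigcup_(k in same) B k); first exact: bigcup_open.
    apply/seteqP; split=> z; first by move=> [k ck [Sz Bz]]; split; exists k.
    by move=> [[k _ [Sz _]] [k' ck' Bz]]; exists k'.
  - exists (~` \bigcup_(k in ~` same) B k); first exact/open_closedC/bigcup_open.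
    apply/seteqP; split=> z.
      move=> [k ck [Sz Bz]]; split; first by exists k.
      by move=> [k' ck' Bz']; apply: ck'; rewrite /same/= (overlap_eq Sz Bz' Bz).
    move=> [[k _ [Sz Bz]] notbad]; exists k => //.
    by apply: contrapT => ck; apply: notbad; exists k.
have : (\bigcup_(k in [set: I]) (S `&` B k)) zj by exists j.
rewrite -cover_same => -[k ck [_ Bzk]].
by rewrite (overlap_eq Szj Bzj Bzk).
Qed.

End connected_cover.

Section euclidean_norm.
Variable R : realType.

Lemma CauchySchwarz_sum n (a b : 'I_n -> R) :
  (\sum_i a i * b i) ^+ 2 <= (\sum_i a i ^+ 2) * (\sum_i b i ^+ 2).
Proof.
set A := \sum_i a i ^+ 2; set B := \sum_i b i ^+ 2; set D := \sum_i a i * b i.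
have AB : A * B = \sum_i \sum_j a i ^+ 2 * b j ^+ 2.
  by rewrite mulr_suml; apply: eq_bigr => i _; rewrite mulr_sumr.
have BA : A * B = \sum_i \sum_j a j ^+ 2 * b i ^+ 2.
  rewrite mulrC mulr_suml; apply: eq_bigr => i _.
  by rewrite mulr_sumr; apply: eq_bigr => j _; rewrite mulrC.
have DD : D ^+ 2 = \sum_i \sum_j (a i * b i) * (a j * b j).
  by rewrite expr2 mulr_suml; apply: eq_bigr => i _; rewrite mulr_sumr.
have lagrange : \sum_i \sum_j (a i * b j - a j * b i) ^+ 2 = A * B + A * B - 2 * D ^+ 2.
  rewrite {1}AB BA DD mulr_sumr -big_split -sumrB /=; apply: eq_bigr => i _.
  by rewrite mulr_sumr -big_split -sumrB /=; apply: eq_bigr => j _; ring.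
have : 0 <= \sum_i \sum_j (a i * b j - a j * b i) ^+ 2.
  by apply: sumr_ge0 => i _; apply: sumr_ge0 => j _; exact: sqr_ge0.
rewrite lagrange; lra.
Qed.

Lemma norm2N n (v : 'cV[R]_n) : norm2 (- v) = norm2 v.
Proof. by rewrite /norm2; congr Num.sqrt; apply: eq_bigr => i _; rewrite mxE sqrrN. Qed.

Lemma norm2_distC n (a b : 'cV[R]_n) : norm2 (a - b) = norm2 (b - a).
Proof. by rewrite -norm2N opprB. Qed.

Lemma norm2_0 n : norm2 (0 : 'cV[R]_n) = 0.
Proof. by rewrite /norm2 big1 ?sqrtr0 // => i _; rewrite mxE expr0n. Qed.

Lemma ler_norm2D n (a b : 'cV[R]_n) : norm2 (a + b) <= norm2 a + norm2 b.
Proof.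
set A := \sum_i a i 0 ^+ 2; set B := \sum_i b i 0 ^+ 2.
set D := \sum_i a i 0 * b i 0.
have A_ge0 : 0 <= A by apply: sumr_ge0 => i _; exact: sqr_ge0.
have B_ge0 : 0 <= B by apply: sumr_ge0 => i _; exact: sqr_ge0.
have sumD : \sum_i (a + b) i 0 ^+ 2 = A + B + 2 * D.
  rewrite /A /B /D mulr_sumr -!big_split /=; apply: eq_bigr => i _.
  by rewrite mxE; ring.
have D_le : D <= Num.sqrt A * Num.sqrt B.
  rewrite -sqrtrM // (le_trans (ler_norm D)) // -sqrtr_sqr ler_sqrt ?mulr_ge0 //.
  exact: CauchySchwarz_sum.
rewrite /norm2 sumD -/A -/B -[_ + Num.sqrt B]ger0_norm ?addr_ge0 ?sqrtr_ge0 //.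
rewrite -sqrtr_sqr ler_sqrt ?sqr_ge0 // sqrrD !sqr_sqrtr //; lra.
Qed.

Lemma norm2_perm_mx n (P : 'M[R]_n) (v : 'cV[R]_n) : is_perm_mx P ->
  norm2 (P *m v) = norm2 v.
Proof.
move=> /is_perm_mxP [sg ->]; rewrite -row_permE /norm2; congr Num.sqrt.
by rewrite [RHS](reindex_inj (@perm.perm_inj _ sg)); apply: eq_bigr => i _; rewrite mxE.
Qed.

Lemma continuous_norm2 n : continuous (@norm2 R n).
Proof.
have sumsq_cont : continuous (fun v : 'cV[R]_n => \sum_i v i 0 ^+ 2).
  apply: (continuous_big add_continuous) => i _ v.
  under eq_fun do rewrite expr2.
  by apply: continuousM; exact: coord_continuous.
have -> : @norm2 R n = Num.sqrt \o (fun v : 'cV[R]_n => \sum_i v i 0 ^+ 2) by [].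
move=> v; apply: continuous_comp; [exact: sumsq_cont | exact: sqrt_continuous].
Qed.

Lemma open_ball_norm2 n (c : 'cV[R]_n) (e : R) : open [set z | norm2 (z - c) < e].
Proof.
rewrite -[X in open X]/((fun z => norm2 (z - c)) @^-1` [set x | x < e]).
apply: open_comp; last exact: open_lt.
move=> z _; apply: continuous_comp; last exact: continuous_norm2.
by apply: continuousB => //; exact: cst_continuous.
Qed.

End euclidean_norm.

Section lipschitz_permutation_fit.
Variables (R : realType) (d m : nat) (f : 'cV[R]_d -> 'cV[R]_m)
  (g : 'cV[R]_m -> 'cV[R]_d) (rho : 'cV[R]_d -> 'cV[R]_d) (Lf Lg Lrho : R).
Hypotheses (Lg_ge0 : 0 <= Lg) (f_lip : lipschitz2 Lf f) (g_lip : lipschitz2 Lg g)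
  (rho_lip : lipschitz2 Lrho rho).

Lemma perm_fit_error_le (P : 'M[R]_d) (s1 s2 : 'cV[R]_d) :
  is_perm_mx P -> g (f s2) = P *m rho s2 ->
  norm2 (g (f s1) - P *m rho s1) <= (Lf * Lg + Lrho) * norm2 (s1 - s2).
Proof.
move=> P_perm fit2.
have -> : g (f s1) - P *m rho s1 = (g (f s1) - g (f s2)) + P *m (rho s2 - rho s1).
  by rewrite fit2 mulmxBr addrA subrK.
apply: (le_trans (ler_norm2D _ _)); rewrite mulrDl.
apply: lerD; last by rewrite norm2_perm_mx // norm2_distC.
by rewrite (mulrC Lf) -mulrA; apply: (le_trans (g_lip _ _)); rewrite ler_wpM2l.
Qed.

Lemma perm_mx_eq_of_near (gamma : R) (P1 P2 : 'M[R]_d) (s1 s2 : 'cV[R]_d) :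
  is_perm_mx P2 -> g (f s2) = P2 *m rho s2 ->
  (P2 != P1 -> gamma <= norm2 (g (f s1) - P2 *m rho s1)) ->
  (Lf * Lg + Lrho) * norm2 (s1 - s2) < gamma -> P2 = P1.
Proof.
move=> P2_perm fit2 separated near; have [//|neq] := eqVneq P2 P1.
have := separated neq; rewrite leNgt => /negP[].
exact: le_lt_trans (perm_fit_error_le s1 P2_perm fit2) near.
Qed.

End lipschitz_permutation_fit.

Theorem lemma5
  (R : realType) (d m : nat) (dT : measure_display) (T : measurableType dT)
  (* data model: s random with distribution P and support S, x = f(s) *)
  (P : probability T R) (sv : T -> 'cV[R]_d) (S : set 'cV[R]_d)
  (f : 'cV[R]_d -> 'cV[R]_m)
  (* J-VolMax: parametrized decoders / encoders, encoder class G, constant C *)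
  (Theta Phi : Type) (fdec : Theta -> 'cV[R]_d -> 'cV[R]_m)
  (genc : Phi -> 'cV[R]_m -> 'cV[R]_d) (G : set ('cV[R]_m -> 'cV[R]_d))
  (C : R) (thhat : Theta) (phhat : Phi)
  (* finite sample set S_N *)
  (N : nat) (s : 'I_N -> 'cV[R]_d)
  (* permutations and component-wise maps *)
  (Pihat : 'I_N -> 'M[R]_d) (rhohat : 'I_d -> R -> R)
  (Lf Lg Lrho gamma : R) (r : 'I_N -> R) :
  (d <= m)%N ->
  diffeo_onto_image f ->
  (forall w, S (sv w)) ->
  0 < C ->
  jvm_optimal P (fun w => f (sv w)) (f @` S) fdec genc G C thhat phhat ->
  (forall n, S (s n)) ->
  (forall n, SDI f (s n)) ->
  (forall n, is_perm_mx (Pihat n)) ->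
  (forall k, bijective (rhohat k)) ->
  (forall n, genc phhat (f (s n))
             = Pihat n *m (\col_k rhohat k (s n k 0))) ->
  0 < Lf -> 0 < Lg -> 0 < Lrho ->
  lipschitz2 Lf f ->
  lipschitz2 Lg (genc phhat) ->
  lipschitz2 Lrho (fun z : 'cV[R]_d => \col_k rhohat k (z k 0)) ->
  0 < gamma ->
  (forall (Pi : 'M[R]_d) (n : 'I_N), is_perm_mx Pi -> Pi != Pihat n ->
     gamma <= norm2 (genc phhat (f (s n)) - Pi *m (\col_k rhohat k (s n k 0)))) ->
  (forall n, 0 < r n /\ r n < gamma / (2 * (Lf * Lg + Lrho))) ->
  connected (\bigcup_(n in [set: 'I_N])
               [set z | S z /\ norm2 (z - s n) < r n]) ->
  exists Pi : 'M[R]_d, is_perm_mx Pi /\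
    (forall n, Pihat n = Pi) /\
    (forall n, genc phhat (f (s n)) = Pi *m (\col_k rhohat k (s n k 0))).
Proof.
move=> _ _ _ _ _ S_s _ Pihat_perm _ fit Lf_gt0 Lg_gt0 Lrho_gt0 f_lip g_lip rho_lip
  _ separated r_small conn.
set K := Lf * Lg + Lrho.
have K_gt0 : 0 < K by rewrite addr_gt0 ?mulr_gt0.
have overlap_eq n n' z : S z -> norm2 (z - s n) < r n -> norm2 (z - s n') < r n' ->
    Pihat n = Pihat n'.
  move=> _ zn zn'; apply/esym.
  apply: (perm_mx_eq_of_near (ltW Lg_gt0) f_lip g_lip rho_lip (Pihat_perm n') (fit n')
    (separated _ n (Pihat_perm n'))).
  have dist_lt : norm2 (s n - s n') < r n + r n'.
    rewrite -[s n](subrK z) -addrA; apply: le_lt_trans (ler_norm2D _ _) _.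
    by rewrite norm2_distC ltrD.
  have [_ rn] := r_small n; have [_ rn'] := r_small n'.
  have halves : gamma / (2 * K) + gamma / (2 * K) = K^-1 * gamma.
    by field; rewrite gt_eqF.
  by rewrite mulrC -ltr_pdivlMr // mulrC -halves; lra.
have all_eq n n' : Pihat n = Pihat n'.
  have ball_center k : (S `&` [set z | norm2 (z - s k) < r k]) (s k).
    by split; [exact: S_s | rewrite /= subrr norm2_0; case: (r_small k)].
  apply: (connected_bigcup_locally_const _ overlap_eq conn).
  - by move=> k; exact: open_ball_norm2.
  - by exists (s n); exact: ball_center.
  - by exists (s n'); exact: ball_center.
have [N0 | N_gt0] := posnP N.
  exists 1%:M; split; first exact: is_perm_mx1.
  by split=> -[n n_lt]; exfalso; rewrite N0 in n_lt.
exists (Pihat (Ordinal N_gt0)); split; first exact: Pihat_perm.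
by split=> [n | n]; rewrite ?fit (all_eq n (Ordinal N_gt0)).
Qed.
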